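(* Let $c>0$ and $\alpha\in(0,2)$, and let $s_{\alpha,c}$ be the SIGTRON function defined below. Then $s_{\alpha,c}$ has an inflection point $x_{ip}$ lying in the interior of $\mathrm{dom}(\sigma_{\alpha,c})$, given by $$x_{ip}=-\ln_{\alpha,c}\!\left(\frac{c\alpha}{2-\alpha}\right).$$ When $\alpha=1$, $x_{ip}=0$, which is the point where $s_{\alpha,c}=1/2$.
   Context: For $c>0$, $\alpha\ge0$, $\alpha\ne1$, put $c_\alpha=\frac{1}{\alpha-1}c^{1-\alpha}$ and $x_\alpha=\frac{1}{\alpha-1}x^{1-\alpha}$. The extended logarithm is $\ln_{\alpha,c}(x)=\ln(x/c)$ if $\alpha=1$ and $\ln_{\alpha,c}(x)=c_\alpha-x_\alpha$ otherwise (for $x>0$). The extended exponential is $\exp_{\alpha,c}(x)=c\exp(x)$ if $\alpha=1$ and $c\left(1-\frac{x}{c_\alpha}\right)^{1/(1-\alpha)}$ otherwise, with domain $\mathbb R$ if $\alpha=1$, $\{x\ge c_\alpha\}$ if $0\le\alpha<1$, $\{x<c_\alpha\}$ if $\alpha>1$. The extended asymmetric sigmoid is $\sigma_{\alpha,c}(x)=\frac{c}{c+\exp_{\alpha,c}(-x)}$ with domain $\mathbb R$ if $\alpha=1$, $\{x\le-c_\alpha\}$ if $0\le\alpha<1$, $\{x\ge -c_\alpha\}$ if $\alpha>1$ (with $\sigma_{\alpha,c}(-c_\alpha)=0$ for $\alpha>1$). SIGTRON is $s_{\alpha,c}(x)=\sigma_{\alpha,c}(x)$ on $\mathrm{dom}(\sigma_{\alpha,c})$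 and $s_{\alpha,c}(x)=\sigma_P(x)$ otherwise, where $\sigma_P(x)=1$ for $x\ge0$ and $0$ for $x<0$. An inflection point is a point where the second derivative vanishes and the concavity changes. *)

From Stdlib Require Import Reals Lra.
From Coquelicot Require Import Coquelicot.
Open Scope R_scope.

Definition c_alpha (alpha c : R) : R := Rpower c (1 - alpha) / (alpha - 1).

Definition ext_ln (alpha c x : R) : R :=
  if Req_EM_T alpha 1 then ln (x / c)
  else c_alpha alpha c - c_alpha alpha x.

(* real power b^e for b >= 0; the value 0^e (e > 0) is 0 *)
Definition rpow0 (b e : R) : R := if Rlt_dec 0 b then Rpower b e else 0.

Definition ext_exp (alpha c x : R) : R :=
  if Req_EM_T alpha 1 then c * exp x
  else c * rpow0 (1 - x / c_alpha alpha c) (1 / (1 - alpha)).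

Definition dom_sigma (alpha c x : R) : Prop :=
  if Req_EM_T alpha 1 then True
  else if Rlt_dec alpha 1 then x <= - c_alpha alpha c
  else - c_alpha alpha c <= x.

(* Extended asymmetric sigmoid sigma_{alpha,c}; for alpha > 1 the boundary
   value sigma(-c_alpha) = 0 is set explicitly (there exp_{alpha,c}(-x) = +oo). *)
Definition ext_sigma (alpha c x : R) : R :=
  if Req_EM_T alpha 1 then c / (c + ext_exp alpha c (- x))
  else if Rlt_dec 1 alpha then
    (if Req_EM_T x (- c_alpha alpha c) then 0 else c / (c + ext_exp alpha c (- x)))
  else c / (c + ext_exp alpha c (- x)).

Definition sigma_P (x : R) : R := if Rle_dec 0 x then 1 else 0.

Definition sigtron (alpha c x : R) : R :=
  if Req_EM_T alpha 1 then ext_sigma alpha c x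
  else if Rlt_dec alpha 1 then
    (if Rle_dec x (- c_alpha alpha c) then ext_sigma alpha c x else sigma_P x)
  else
    (if Rle_dec (- c_alpha alpha c) x then ext_sigma alpha c x else sigma_P x).

Definition in_interior (D : R -> Prop) (x : R) : Prop :=
  exists d : R, 0 < d /\ forall y, Rabs (y - x) < d -> D y.

Definition is_inflection_point (f : R -> R) (x : R) : Prop :=
  exists d : R, 0 < d /\
    (forall y, Rabs (y - x) < d -> ex_derive f y /\ ex_derive_n f 2 y) /\
    Derive_n f 2 x = 0 /\
    ( ((forall y, x - d < y < x -> 0 < Derive_n f 2 y) /\
       (forall y, x < y < x + d -> Derive_n f 2 y < 0))
   \/ ((forall y, x - d < y < x -> Derive_n f 2 y < 0) /\
       (forall y, x < y < x + d -> 0 < Derive_n f 2 y)) ).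

From Stdlib Require Import Reals Lra.
From Coquelicot Require Import Coquelicot.
Open Scope R_scope.

(* On the interior of its domain the SIGTRON is 1 / (1 + u) with
   u z = exp_{alpha,c}(-z) / c, which is positive and solves
   u' = - c^(alpha-1) u^alpha.  For any f = 1 / (1 + u) with u > 0 and
   u' = - m u^a (m > 0) one computes
     f'' = m^2 u^(2a-1) ((2 - a) u - a) / (1 + u)^3,
   so f'' vanishes exactly where u = a / (2 - a) and, u being strictly
   decreasing, changes sign there from + to -.  Finally exp_{alpha,c}
   inverts ln_{alpha,c}, whence u x_ip = alpha / (2 - alpha). *)

Lemma is_derive_Rpower_comp (u : R -> R) (z du a : R) :
  0 < u z -> is_derive u z du ->
  is_derive (fun t => Rpower (u t) a) z (a * Rpower (u z) (a - 1) * du).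
Proof.
  intros Hpos Hu.
  assert (Hpow : is_derive (fun x => Rpower x a) (u z) (a * Rpower (u z) (a - 1))).
  { apply is_derive_Reals, derivable_pt_lim_power, Hpos. }
  rewrite Rmult_comm. exact (is_derive_comp _ _ z _ _ Hpow Hu).
Qed.

Lemma locally_open_interval (x0 d z : R) :
  x0 - d < z < x0 + d -> locally z (fun t => x0 - d < t < x0 + d).
Proof.
  apply (locally_open (fun t => x0 - d < t < x0 + d)); auto.
  apply open_and; [apply open_gt | apply open_lt].
Qed.

Lemma locally_ex_interval (P : R -> Prop) (x0 : R) :
  locally x0 P -> exists d, 0 < d /\ forall z, x0 - d < z < x0 + d -> P z.
Proof.
  intros [eps Heps]. exists eps. split; [apply cond_pos |].
  intros z Hz. apply Heps. apply Rabs_def1; simpl; unfold minus, plus, opp; simpl; lra.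
Qed.

Lemma locally_pos_of_continuous (g : R -> R) (x : R) :
  continuous g x -> 0 < g x -> locally x (fun y => 0 < g y).
Proof.
  intros Hg Hx. apply Hg. apply (locally_open (fun y => 0 < y)); [apply open_gt | auto | exact Hx].
Qed.

Section PowerDecay.

Variables (f u : R -> R) (m a x0 d : R).
Hypothesis Hu_pos : forall z, x0 - d < z < x0 + d -> 0 < u z.
Hypothesis Hu_derive :
  forall z, x0 - d < z < x0 + d -> is_derive u z (- m * Rpower (u z) a).
Hypothesis Hf : forall z, x0 - d < z < x0 + d -> f z = 1 / (1 + u z).

Definition logistic_deriv1 (z : R) : R := m * Rpower (u z) a / (1 + u z) ^ 2.

Definition logistic_weight (z : R) : R :=
  m ^ 2 * Rpower (u z) a * Rpower (u z) (a - 1) / (1 + u z) ^ 3.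

Definition logistic_deriv2 (z : R) : R := logistic_weight z * ((2 - a) * u z - a).

Lemma is_derive_logistic1 z :
  x0 - d < z < x0 + d -> is_derive f z (logistic_deriv1 z).
Proof.
  intros Hz. pose proof (Hu_pos z Hz) as Hpos.
  assert (Hden : 1 + u z <> 0) by lra.
  apply is_derive_ext_loc with (fun t => 1 / (1 + u t)).
  { apply (filter_imp _ _ (fun t Ht => eq_sym (Hf t Ht))), locally_open_interval, Hz. }
  assert (Hden' := is_derive_plus _ _ z _ _ (is_derive_const 1 z) (Hu_derive z Hz)).
  assert (Hq := is_derive_div _ _ z _ _ (is_derive_const 1 z) Hden' Hden).
  unfold logistic_deriv1. replace (m * Rpower (u z) a / (1 + u z) ^ 2)
    with ((0 * (1 + u z) - 1 * (0 + - m * Rpower (u z) a)) / (1 + u z) ^ 2)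
    by (field; lra).
  exact Hq.
Qed.

Lemma is_derive_logistic2 z :
  x0 - d < z < x0 + d -> is_derive logistic_deriv1 z (logistic_deriv2 z).
Proof.
  intros Hz. pose proof (Hu_pos z Hz) as Hpos. pose proof (Hu_derive z Hz) as Hd.
  assert (Hden_ne : 1 + u z <> 0) by lra.
  assert (Hnum := is_derive_scal _ z m _ (is_derive_Rpower_comp u z _ a Hpos Hd)).
  assert (Hden_pow := is_derive_pow (fun t => 1 + u t) 2 z _
                        (is_derive_plus _ _ _ _ _ (is_derive_const 1 z) Hd)).
  assert (Hq := is_derive_div _ _ z _ _ Hnum Hden_pow (pow_nonzero _ 2 Hden_ne)).
  assert (Hsplit : Rpower (u z) a = Rpower (u z) (a - 1) * u z).
  { rewrite <- (Rpower_1 (u z)) at 3 by exact Hpos. rewrite <- Rpower_plus. f_equal. ring. }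
  replace (logistic_deriv2 z) with
    ((m * (a * Rpower (u z) (a - 1) * (- m * Rpower (u z) a)) * (1 + u z) ^ 2 -
      m * Rpower (u z) a * (INR 2 * (0 + - m * Rpower (u z) a) * (1 + u z) ^ Nat.pred 2)) /
     ((1 + u z) ^ 2) ^ 2).
  { exact Hq. }
  unfold logistic_deriv2, logistic_weight.
  rewrite Hsplit. simpl. field. lra.
Qed.

Lemma Derive_n_2_logistic z :
  x0 - d < z < x0 + d ->
  ex_derive f z /\ ex_derive_n f 2 z /\ Derive_n f 2 z = logistic_deriv2 z.
Proof.
  intros Hz.
  assert (Hloc : locally z (fun t => Derive f t = logistic_deriv1 t)).
  { apply (filter_imp _ _ (fun t Ht => is_derive_unique _ _ _ (is_derive_logistic1 t Ht))).
    apply locally_open_interval, Hz. }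
  split; [| split].
  - eexists; apply is_derive_logistic1, Hz.
  - apply ex_derive_ext_loc with logistic_deriv1.
    + apply (filter_imp _ _ (fun t Ht => eq_sym Ht)), Hloc.
    + eexists; apply is_derive_logistic2, Hz.
  - change (Derive (Derive f) z = logistic_deriv2 z).
    rewrite (Derive_ext_loc _ logistic_deriv1 z Hloc).
    apply is_derive_unique, is_derive_logistic2, Hz.
Qed.

Lemma logistic_weight_pos z : 0 < m -> x0 - d < z < x0 + d -> 0 < logistic_weight z.
Proof.
  intros Hm Hz. pose proof (Hu_pos z Hz) as Hpos. unfold logistic_weight, Rpower.
  pose proof (exp_pos (a * ln (u z))). pose proof (exp_pos ((a - 1) * ln (u z))).
  apply Rdiv_lt_0_compat; [| apply pow_lt; lra].
  apply Rmult_lt_0_compat; [apply Rmult_lt_0_compat |]; auto. apply pow_lt, Hm.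
Qed.

Lemma power_decay_strict_decr y1 y2 :
  0 < m -> x0 - d < y1 -> y1 < y2 -> y2 < x0 + d -> u y2 < u y1.
Proof.
  intros Hm H1 H12 H2. apply Ropp_lt_cancel.
  apply (incr_function (fun t => - u t) (x0 - d) (x0 + d) (fun t => m * Rpower (u t) a));
    simpl; auto.
  - intros t Ht1 Ht2. replace (m * Rpower (u t) a) with (- (- m * Rpower (u t) a)) by ring.
    apply (is_derive_opp u), Hu_derive. lra.
  - intros t _ _. apply Rmult_lt_0_compat; [exact Hm | apply exp_pos].
Qed.

Lemma inflection_point_of_power_decay :
  0 < m -> 0 < d -> (2 - a) * u x0 = a -> is_inflection_point f x0.
Proof.
  intros Hm Hd Hx0.
  assert (Hx0I : x0 - d < x0 < x0 + d) by lra.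
  pose proof (Hu_pos x0 Hx0I) as Hpos0.
  assert (Ha2 : 0 < 2 - a) by nra.
  assert (Hsign : forall y, x0 - d < y < x0 + d ->
            Derive_n f 2 y = logistic_weight y * (2 - a) * (u y - u x0)).
  { intros y Hy. destruct (Derive_n_2_logistic y Hy) as [_ [_ ->]].
    unfold logistic_deriv2. rewrite Rmult_assoc. f_equal. lra. }
  exists d. split; [exact Hd |]. split; [| split].
  - intros y Hy. apply Rabs_def2 in Hy.
    destruct (Derive_n_2_logistic y ltac:(lra)) as [H1 [H2 _]]. auto.
  - rewrite Hsign by exact Hx0I. ring.
  - left. split; intros y Hy; rewrite Hsign by lra;
      pose proof (logistic_weight_pos y Hm ltac:(lra)) as Hw.
    + assert (u x0 < u y) by (apply power_decay_strict_decr; lra).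
      apply Rmult_lt_0_compat; nra.
    + assert (u y < u x0) by (apply power_decay_strict_decr; lra).
      assert (0 < logistic_weight y * (2 - a)) by nra. nra.
Qed.

End PowerDecay.

Lemma inflection_in_interior_of_power_decay (f u : R -> R) (D : R -> Prop) (m a x0 d : R) :
  0 < m -> 0 < d -> (2 - a) * u x0 = a ->
  (forall z, x0 - d < z < x0 + d ->
     0 < u z /\ is_derive u z (- m * Rpower (u z) a) /\ f z = 1 / (1 + u z) /\ D z) ->
  in_interior D x0 /\ is_inflection_point f x0.
Proof.
  intros Hm Hd Hx0 Hnear. split.
  - exists d. split; [exact Hd |]. intros y Hy. apply Rabs_def2 in Hy. apply Hnear. lra.
  - apply (inflection_point_of_power_decay f u m a x0 d); auto;
      intros z Hz; apply Hnear, Hz.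
Qed.

Lemma sigtron_1_eq (c z : R) : 0 < c -> sigtron 1 c z = 1 / (1 + exp (- z)).
Proof.
  intros Hc. unfold sigtron, ext_sigma, ext_exp.
  destruct (Req_EM_T 1 1) as [_ | Hne]; [| contradiction].
  pose proof (exp_pos (- z)). field. split; nra.
Qed.

Lemma sigtron_1_inflection (c : R) :
  0 < c -> in_interior (dom_sigma 1 c) 0 /\ is_inflection_point (sigtron 1 c) 0.
Proof.
  intros Hc.
  apply (inflection_in_interior_of_power_decay _ (fun z => exp (- z)) _ 1 1 0 1); try lra.
  - rewrite Ropp_0, exp_0. ring.
  - intros z _. pose proof (exp_pos (- z)) as Hpos. split; [| split; [| split]].
    + exact Hpos.
    + rewrite Rpower_1 by exact Hpos. auto_derive; [exact I | ring].
    + apply sigtron_1_eq, Hc.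
    + unfold dom_sigma. destruct (Req_EM_T 1 1); [exact I | contradiction].
Qed.

Section AlphaNeq1.

Variables (alpha c : R).
Hypotheses (Hc : 0 < c) (Ha1 : alpha <> 1).

Lemma c_alpha_mul_pos : 0 < (alpha - 1) * c_alpha alpha c.
Proof.
  unfold c_alpha. pose proof (exp_pos ((1 - alpha) * ln c)).
  unfold Rpower. field_simplify; [lra |]. intros Hzero; apply Ha1; lra.
Qed.

Lemma c_alpha_neq0 : c_alpha alpha c <> 0.
Proof. pose proof c_alpha_mul_pos as Hmul. intros Hzero. rewrite Hzero in Hmul. lra. Qed.

(* exp_{alpha,c}(-z) / c, i.e. the odds (1 - sigma) / sigma, wherever 1 + z / c_alpha > 0 *)
Definition sigma_odds (z : R) : R :=
  Rpower (1 + z / c_alpha alpha c) (1 / (1 - alpha)).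

Lemma lt_neg_c_alpha_of_base_pos z :
  0 < 1 + z / c_alpha alpha c ->
  (alpha < 1 -> z < - c_alpha alpha c) /\ (1 < alpha -> - c_alpha alpha c < z).
Proof.
  intros Hz. pose proof c_alpha_mul_pos as Hmul. pose proof c_alpha_neq0 as Hne.
  assert (Hprod : 0 < c_alpha alpha c * (c_alpha alpha c + z)).
  { replace (c_alpha alpha c * (c_alpha alpha c + z))
      with (c_alpha alpha c ^ 2 * (1 + z / c_alpha alpha c)) by (field; exact Hne).
    apply Rmult_lt_0_compat; [apply pow2_gt_0 |]; assumption. }
  split; intros Ha; nra.
Qed.

Lemma dom_sigma_sigtron_eq_odds z :
  0 < 1 + z / c_alpha alpha c ->
  dom_sigma alpha c z /\ sigtron alpha c z = 1 / (1 + sigma_odds z).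
Proof.
  intros Hz. destruct (lt_neg_c_alpha_of_base_pos z Hz) as [Hlt Hgt].
  assert (Hodds : 0 < sigma_odds z) by apply exp_pos.
  unfold dom_sigma, sigtron, ext_sigma, ext_exp, rpow0.
  destruct (Req_EM_T alpha 1) as [| _]; [contradiction |].
  replace (1 - - z / c_alpha alpha c) with (1 + z / c_alpha alpha c) by (field; exact c_alpha_neq0).
  destruct (Rlt_dec 0 (1 + z / c_alpha alpha c)) as [_ | Hn]; [| contradiction].
  fold (sigma_odds z).
  destruct (Rlt_dec alpha 1) as [Ha | Ha].
  - specialize (Hlt Ha).
    destruct (Rle_dec z (- c_alpha alpha c)) as [_ | Hn]; [| lra].
    destruct (Rlt_dec 1 alpha) as [Ha' | _]; [lra |].
    split; [lra | field; split; nra].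
  - assert (Ha' : 1 < alpha) by lra. specialize (Hgt Ha').
    destruct (Rle_dec (- c_alpha alpha c) z) as [_ | Hn]; [| lra].
    destruct (Rlt_dec 1 alpha) as [_ | Hn]; [| contradiction].
    destruct (Req_EM_T z (- c_alpha alpha c)) as [Heq | _]; [lra |].
    split; [lra | field; split; nra].
Qed.

Lemma is_derive_sigma_odds z :
  0 < 1 + z / c_alpha alpha c ->
  is_derive sigma_odds z (- Rpower c (alpha - 1) * Rpower (sigma_odds z) alpha).
Proof.
  intros Hz. pose proof c_alpha_neq0 as Hne.
  assert (Hbase : is_derive (fun t => 1 + t / c_alpha alpha c) z (/ c_alpha alpha c)).
  { auto_derive; [exact I | field; exact Hne]. }
  replace (- Rpower c (alpha - 1) * Rpower (sigma_odds z) alpha)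
    with (1 / (1 - alpha) * Rpower (1 + z / c_alpha alpha c) (1 / (1 - alpha) - 1)
          * / c_alpha alpha c).
  { exact (is_derive_Rpower_comp _ z _ _ Hz Hbase). }
  unfold sigma_odds. rewrite Rpower_mult.
  replace (1 / (1 - alpha) * alpha) with (1 / (1 - alpha) - 1)
    by (field; intros Hzero; apply Ha1; lra).
  replace (alpha - 1) with (- (1 - alpha)) by ring. rewrite Rpower_Ropp.
  unfold c_alpha. field.
  repeat split; [apply Rgt_not_eq, exp_pos | |]; intros Hzero; apply Ha1; lra.
Qed.

Lemma base_at_neg_ext_ln r :
  0 < r -> 1 + - ext_ln alpha c (c * r) / c_alpha alpha c = Rpower r (1 - alpha).
Proof.
  intros Hr. unfold ext_ln. destruct (Req_EM_T alpha 1) as [| _]; [contradiction |].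
  pose proof c_alpha_neq0 as Hne. unfold c_alpha in *.
  rewrite <- (Rpower_mult_distr c r) by assumption. field. split.
  - intros Hzero; apply Ha1; lra.
  - apply Rgt_not_eq, exp_pos.
Qed.

Lemma sigma_odds_neg_ext_ln r : 0 < r -> sigma_odds (- ext_ln alpha c (c * r)) = r.
Proof.
  intros Hr. unfold sigma_odds. rewrite base_at_neg_ext_ln, Rpower_mult by exact Hr.
  replace ((1 - alpha) * (1 / (1 - alpha))) with 1 by (field; intros Hzero; apply Ha1; lra).
  apply Rpower_1, Hr.
Qed.

Lemma sigtron_inflection_neq1 :
  0 < alpha < 2 ->
  let x_ip := - ext_ln alpha c (c * alpha / (2 - alpha)) in
  in_interior (dom_sigma alpha c) x_ip /\ is_inflection_point (sigtron alpha c) x_ip.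
Proof.
  intros Ha x_ip.
  set (r := alpha / (2 - alpha)).
  assert (Hr : 0 < r) by (apply Rdiv_lt_0_compat; lra).
  assert (Hx : x_ip = - ext_ln alpha c (c * r)).
  { unfold x_ip, r, Rdiv. rewrite Rmult_assoc. reflexivity. }
  assert (Hcont : continuous (fun z => 1 + z / c_alpha alpha c) x_ip).
  { apply (@ex_derive_continuous R_AbsRing R_NormedModule). auto_derive. exact I. }
  assert (Hbase : 0 < 1 + x_ip / c_alpha alpha c).
  { rewrite Hx, base_at_neg_ext_ln by exact Hr. apply exp_pos. }
  destruct (locally_ex_interval _ x_ip (locally_pos_of_continuous _ x_ip Hcont Hbase))
    as [d [Hd Hnear]].
  apply (inflection_in_interior_of_power_decay _ sigma_odds _ (Rpower c (alpha - 1)) alpha x_ip d).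
  - apply exp_pos.
  - exact Hd.
  - rewrite Hx, sigma_odds_neg_ext_ln by exact Hr. unfold r. field. lra.
  - intros z Hz. specialize (Hnear z Hz).
    destruct (dom_sigma_sigtron_eq_odds z Hnear) as [Hdom Heq].
    split; [apply exp_pos | split; [apply is_derive_sigma_odds, Hnear | split; assumption]].
Qed.

End AlphaNeq1.

Theorem corollary1 (c alpha : R) (hc : 0 < c) (ha0 : 0 < alpha) (ha2 : alpha < 2) :
  let x_ip := - ext_ln alpha c (c * alpha / (2 - alpha)) in
  in_interior (dom_sigma alpha c) x_ip /\
  is_inflection_point (sigtron alpha c) x_ip /\
  (alpha = 1 -> x_ip = 0 /\ sigtron alpha c x_ip = 1 / 2).
Proof.
  intros x_ip.
  destruct (Req_EM_T alpha 1) as [-> | Ha1].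
  - assert (Hx : x_ip = 0).
    { unfold x_ip, ext_ln. destruct (Req_EM_T 1 1) as [_ | Hne]; [| contradiction].
      replace (c * 1 / (2 - 1) / c) with 1 by (field; lra). rewrite ln_1. ring. }
    rewrite Hx. destruct (sigtron_1_inflection c hc) as [Hint Hinfl].
    split; [exact Hint | split; [exact Hinfl |]].
    intros _. split; [reflexivity |].
    rewrite sigtron_1_eq, Ropp_0, exp_0 by exact hc. field.
  - destruct (sigtron_inflection_neq1 alpha c hc Ha1 (conj ha0 ha2)) as [Hint Hinfl].
    split; [exact Hint | split; [exact Hinfl |]].
    intros Ha. contradiction.
Qed.
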